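(* If $\mathcal F=(X,\le,R,S)$ is a WHB-frame, then $\mathcal A(\mathcal F)=(\mathrm{Up}(X),\cap,\cup,\Rightarrow_R,\Leftarrow_S,\emptyset,X)$ is a WHB-algebra.
   Context: A WHB-frame is $(X,\le,R,S)$ with $\le$ a partial order on $X$ and $R,S$ binary relations on $X$ such that: if $x\le y$ and $(y,z)\in R$ then $(x,z)\in R$; if $x\le y$ and $(x,z)\in S$ then $(y,z)\in S$; and $S=R^{-1}$ (i.e. $(x,y)\in S$ iff $(y,x)\in R$). $\mathrm{Up}(X)$ is the set of upsets of $(X,\le)$; for $U,V\in\mathrm{Up}(X)$, $U\Rightarrow_R V=\{x\colon R(x)\cap U\subseteq V\}$ and $U\Leftarrow_S V=\{x\colon S(x)\cap(U\setminus V)\neq\emptyset\}$, where $\mathcal R(x)=\{y\colon(x,y)\in\mathcal R\}$. A WHB-algebra is an algebra $(A,\wedge,\vee,\to,\leftarrow,0,1)$ such that $(A,\wedge,\vee,0,1)$ is a bounded distributive lattice and for all $a,b,c\in A$: $a\to a=1$; $a\to(b\wedge c)=(a\to b)\wedge(a\to c)$; $(a\vee b)\to c=(a\to c)\wedge(b\to c)$; $(a\to b)\wedge(b\to c)\le a\to c$; $a\leftarrow a=0$; $(a\vee b)\leftarrow c=(a\leftarrow c)\vee(b\leftarrow c)$; $a\leftarrow(b\wedge c)=(a\leftarrow b)\vee(a\leftarrow c)$; $a\leftarrow c\le(a\leftarrow b)\vee(b\leftarrow c)$; $a\wedge((a\to b)\leftarrow 0)\le b$; $a\le b\vee(1\to(a\leftarrow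 b))$. *)

Set Implicit Arguments.

Section Defs.
Variable X : Type.

Definition partial_order (le : X -> X -> Prop) : Prop :=
  (forall x, le x x) /\
  (forall x y, le x y -> le y x -> x = y) /\
  (forall x y z, le x y -> le y z -> le x z).

Definition WHB_frame (le R S : X -> X -> Prop) : Prop :=
  partial_order le /\
  (forall x y z, le x y -> R y z -> R x z) /\
  (forall x y z, le x y -> S x z -> S y z) /\
  (forall x y, S x y <-> R y x).

Definition upset (le : X -> X -> Prop) (U : X -> Prop) : Prop :=
  forall x y, le x y -> U x -> U y.

Definition set_cap (U V : X -> Prop) : X -> Prop := fun x => U x /\ V x.
Definition set_cup (U V : X -> Prop) : X -> Prop := fun x => U x \/ V x.
Definition set_empty : X -> Prop := fun _ => False.
Definition set_full : X -> Prop := fun _ => True.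

Definition impR (R : X -> X -> Prop) (U V : X -> Prop) : X -> Prop :=
  fun x => forall y, R x y -> U y -> V y.

Definition coimpS (S : X -> X -> Prop) (U V : X -> Prop) : X -> Prop :=
  fun x => exists y, S x y /\ U y /\ ~ V y.
End Defs.

Section Alg.
Variable T : Type.

(** A WHB-algebra whose carrier is the subset [P] of [T] (with Leibniz equality
    of [T]); the operations are given on [T] and must preserve [P]. *)
Definition WHB_algebra (P : T -> Prop)
  (meet join imp coimp : T -> T -> T) (bot top : T) : Prop :=
  P bot /\ P top /\
  (forall a b, P a -> P b ->
     P (meet a b) /\ P (join a b) /\ P (imp a b) /\ P (coimp a b)) /\
  (forall a b c, P a -> P b -> P c ->
     meet a (meet b c) = meet (meet a b) c /\
     join a (join b c) = join (join a b) c /\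
     meet a (join b c) = join (meet a b) (meet a c)) /\
  (forall a b, P a -> P b ->
     meet a b = meet b a /\ join a b = join b a /\
     meet a (join a b) = a /\ join a (meet a b) = a) /\
  (forall a, P a -> meet a top = a /\ join a bot = a) /\
  (* WHB axioms, with a <= b meaning meet a b = a *)
  (forall a b c, P a -> P b -> P c ->
     imp a a = top /\
     imp a (meet b c) = meet (imp a b) (imp a c) /\
     imp (join a b) c = meet (imp a c) (imp b c) /\
     meet (meet (imp a b) (imp b c)) (imp a c) = meet (imp a b) (imp b c) /\
     coimp a a = bot /\
     coimp (join a b) c = join (coimp a c) (coimp b c) /\
     coimp a (meet b c) = join (coimp a b) (coimp a c) /\
     meet (coimp a c) (join (coimp a b) (coimp b c)) = coimp a c /\
     meet (meet a (coimp (imp a b) bot)) b = meet a (coimp (imp a b) bot) /\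
     meet a (join b (imp top (coimp a b))) = a).
End Alg.

From Stdlib Require Import Classical FunctionalExtensionality PropExtensionality.

(* Every WHB axiom already holds in the algebra of all predicates on X: the
   lattice laws and the laws for [impR] pointwise, those for [coimpS] by a
   classical case split on the middle set, and the two mixed axioms because
   S is the converse of R. The remaining frame conditions only serve to make
   upsets closed under [impR] and [coimpS]. *)

Section PredicateAlgebra.
Variable X : Type.
Implicit Types U V W : X -> Prop.

Definition set_sub U V : Prop := forall x, U x -> V x.

Lemma pred_ext U V : (forall x, U x <-> V x) -> U = V.
Proof.
  intros H; apply functional_extensionality; intro x.
  apply propositional_extensionality, H.
Qed.

Lemma set_cap_eq_l U V : set_sub U V -> set_cap U V = U.
Proof. intros H; apply pred_ext; intro x; unfold set_cap; firstorder. Qed.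

Local Ltac pointwise :=
  apply pred_ext; intro; cbv [set_cap set_cup set_empty set_full]; tauto.

Lemma set_cap_assoc U V W : set_cap U (set_cap V W) = set_cap (set_cap U V) W.
Proof. pointwise. Qed.

Lemma set_cup_assoc U V W : set_cup U (set_cup V W) = set_cup (set_cup U V) W.
Proof. pointwise. Qed.

Lemma set_cap_cup_distr_l U V W :
  set_cap U (set_cup V W) = set_cup (set_cap U V) (set_cap U W).
Proof. pointwise. Qed.

Lemma set_cap_comm U V : set_cap U V = set_cap V U.
Proof. pointwise. Qed.

Lemma set_cup_comm U V : set_cup U V = set_cup V U.
Proof. pointwise. Qed.

Lemma set_cap_cup_absorb U V : set_cap U (set_cup U V) = U.
Proof. pointwise. Qed.

Lemma set_cup_cap_absorb U V : set_cup U (set_cap U V) = U.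
Proof. pointwise. Qed.

Lemma set_cap_full_r U : set_cap U (@set_full X) = U.
Proof. pointwise. Qed.

Lemma set_cup_empty_r U : set_cup U (@set_empty X) = U.
Proof. pointwise. Qed.

Variables R S : X -> X -> Prop.

Lemma impR_refl U : impR R U U = @set_full X.
Proof. apply pred_ext; firstorder. Qed.

Lemma impR_cap_r U V W :
  impR R U (set_cap V W) = set_cap (impR R U V) (impR R U W).
Proof. apply pred_ext; firstorder. Qed.

Lemma impR_cup_l U V W :
  impR R (set_cup U V) W = set_cap (impR R U W) (impR R V W).
Proof. apply pred_ext; firstorder. Qed.

Lemma impR_trans U V W :
  set_sub (set_cap (impR R U V) (impR R V W)) (impR R U W).
Proof. firstorder. Qed.

Lemma coimpS_refl U : coimpS S U U = @set_empty X.
Proof. apply pred_ext; firstorder. Qed.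

Lemma coimpS_cup_l U V W :
  coimpS S (set_cup U V) W = set_cup (coimpS S U W) (coimpS S V W).
Proof. apply pred_ext; firstorder. Qed.

Lemma coimpS_cap_r U V W :
  coimpS S U (set_cap V W) = set_cup (coimpS S U V) (coimpS S U W).
Proof.
  apply pred_ext; intro x; split.
  - intros [y [Sxy [Uy notVWy]]].
    destruct (classic (V y)) as [Vy | notVy].
    + right; exists y; firstorder.
    + left; exists y; firstorder.
  - firstorder.
Qed.

Lemma coimpS_trans U V W :
  set_sub (coimpS S U W) (set_cup (coimpS S U V) (coimpS S V W)).
Proof.
  intros x [y [Sxy [Uy notWy]]].
  destruct (classic (V y)) as [Vy | notVy].
  - right; exists y; auto.
  - left; exists y; auto.
Qed.

Lemma cap_coimpS_impR_sub U V :
  (forall x y, S x y -> R y x) ->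
  set_sub (set_cap U (coimpS S (impR R U V) (@set_empty X))) V.
Proof. intros SR x [Ux [y [Sxy [UVy _]]]]; exact (UVy x (SR x y Sxy) Ux). Qed.

Lemma sub_cup_impR_coimpS U V :
  (forall x y, R x y -> S y x) ->
  set_sub U (set_cup V (impR R (@set_full X) (coimpS S U V))).
Proof.
  intros RS x Ux.
  destruct (classic (V x)) as [Vx | notVx]; [left; exact Vx | right].
  intros y Rxy _; exists x; auto.
Qed.

Variable le : X -> X -> Prop.

Lemma upset_empty : upset le (@set_empty X).
Proof. firstorder. Qed.

Lemma upset_full : upset le (@set_full X).
Proof. firstorder. Qed.

Lemma upset_cap U V : upset le U -> upset le V -> upset le (set_cap U V).
Proof. firstorder. Qed.

Lemma upset_cup U V : upset le U -> upset le V -> upset le (set_cup U V).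
Proof. firstorder. Qed.

Lemma upset_impR U V :
  (forall x y z, le x y -> R y z -> R x z) -> upset le (impR R U V).
Proof. intros R_anti x y lexy H z Ryz; exact (H z (R_anti x y z lexy Ryz)). Qed.

Lemma upset_coimpS U V :
  (forall x y z, le x y -> S x z -> S y z) -> upset le (coimpS S U V).
Proof. intros S_mono x y lexy [z [Sxz UVz]]; exists z; eauto. Qed.

End PredicateAlgebra.

Local Ltac split_conj := repeat match goal with |- _ /\ _ => split end.

Theorem theorem4p7 (X : Type) (le R S : X -> X -> Prop) :
  WHB_frame le R S ->
  WHB_algebra (upset le) (@set_cap X) (@set_cup X) (impR R) (coimpS S)
    (@set_empty X) (@set_full X).
Proof.
  intros [_ [R_anti [S_mono SR]]].
  assert (S_R : forall x y, S x y -> R y x) by (intros; apply SR; auto).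
  assert (R_S : forall x y, R x y -> S y x) by (intros; apply SR; auto).
  unfold WHB_algebra; split_conj.
  - apply upset_empty.
  - apply upset_full.
  - intros a b Ha Hb.
    split_conj; auto using upset_cap, upset_cup, upset_impR, upset_coimpS.
  - intros a b c _ _ _.
    split_conj; auto using set_cap_assoc, set_cup_assoc, set_cap_cup_distr_l.
  - intros a b _ _.
    split_conj;
      auto using set_cap_comm, set_cup_comm, set_cap_cup_absorb, set_cup_cap_absorb.
  - intros a _; split_conj; auto using set_cap_full_r, set_cup_empty_r.
  - intros a b c _ _ _.
    split_conj;
      auto using impR_refl, impR_cap_r, impR_cup_l,
        coimpS_refl, coimpS_cup_l, coimpS_cap_r;
      apply set_cap_eq_l;
      auto using impR_trans, coimpS_trans, cap_coimpS_impR_sub, sub_cup_impR_coimpS.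
Qed.
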